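(* Let $G$ be a complete multipartite graph. Consider the following greedy procedure with $t=1$: while uncolored vertices remain, let $H$ be the subgraph induced by the uncolored vertices; if the largest part of $H$ has at least $2$ vertices, let $W$ be that entire part, otherwise let $W$ be a maximum $1$-sparse set of $H$; assign a new color to all vertices of $W$. Then the resulting coloring is a $1$-relaxed coloring of $G$ using exactly $\chi_1(G)$ colors.
   Context: A set $S\subseteq V(G)$ is $1$-sparse if the induced subgraph $G[S]$ has maximum degree at most $1$. A map $f$ from $V(G)$ to a finite set of colors is a $1$-relaxed coloring if every vertex $u$ has at most one neighbor $v$ with $f(v)=f(u)$; $\chi_1(G)$ is the minimum number of colors in such a coloring. *)

From mathcomp Require Import all_boot.
Set Implicit Arguments. Unset Strict Implicit. Unset Printing Implicit Defensive.

Section Defs.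
Variable T : finType.

Definition relaxed1 (C : eqType) (adj : rel T) (f : T -> C) : bool :=
  [forall u, #|[set v | adj u v && (f v == f u)]| <= 1].

Definition sparse1 (adj : rel T) (S : {set T}) : bool :=
  [forall u in S, #|[set v in S | adj u v]| <= 1].

Definition has_relaxed1_coloring (adj : rel T) (k : nat) : bool :=
  [exists f : {ffun T -> 'I_k}, relaxed1 adj f].

Lemma has_relaxed1_coloring_card (adj : rel T) :
  exists k, has_relaxed1_coloring adj k.
Proof.
exists #|T|; apply/existsP; exists [ffun x => enum_rank x].
apply/forallP => u.
have sub : [set v | adj u v && ([ffun x => enum_rank x] v == [ffun x => enum_rank x] u)] \subset [set u].
  apply/subsetP => v; rewrite !inE !ffunE => /andP[_ /eqP].
  by move/enum_rank_inj => ->.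
by rewrite -(cards1 u); apply: subset_leq_card.
Qed.

Definition chi1 (adj : rel T) : nat := ex_minn (has_relaxed1_coloring_card adj).

(* Complete multipartite graph given by a part assignment:
   two vertices are adjacent iff they lie in different parts. *)
Definition cmp_adj (P : eqType) (part : T -> P) : rel T :=
  fun x y => part x != part y.

Variables (P : eqType) (part : T -> P).

Definition part_in (U : {set T}) (x : T) : {set T} :=
  [set y in U | part y == part x].

Definition max_part_size (U : {set T}) : nat :=
  \max_(x in U) #|part_in U x|.

Definition greedy_step (U W : {set T}) : Prop :=
  if 2 <= max_part_size U then
    exists2 x, x \in U & (#|part_in U x| = max_part_size U /\ W = part_in U x)
  else
    [/\ W \subset U, sparse1 (cmp_adj part) W &
        forall S : {set T}, S \subset U -> sparse1 (cmp_adj part) S -> #|S| <= #|W|].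

(* s = [:: W_1; ...; W_m] is a complete run of the greedy procedure started
   with uncolored set U (color i is assigned to W_(i+1)). *)
Fixpoint greedy_run (U : {set T}) (s : seq {set T}) : Prop :=
  match s with
  | [::] => U = set0
  | W :: s' => U != set0 /\ greedy_step U W /\ greedy_run (U :\: W) s'
  end.

Definition run_coloring (s : seq {set T}) (x : T) : nat :=
  find (fun W : {set T} => x \in W) s.

Definition num_colors (f : T -> nat) : nat := size (undup (map f (enum T))).

End Defs.

From mathcomp Require Import all_boot zify.

(* Call leaders of U the first two vertices (in enumeration order) of each
   part of G[U]; there are sum_parts min(2, |part|) of them.  In a complete
   multipartite graph a 1-sparse set either lies inside one part or has at
   most two vertices, so every colour class of a 1-relaxed colouring holds at
   most two leaders of G and chi_1(G) >= #leaders / 2.  Conversely, every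
   greedy step but the last removes at least two leaders: either a whole part
   with at least two vertices, or, once all parts are singletons and every
   vertex is a leader, a maximum 1-sparse set, which has two vertices as long
   as two remain.  Hence the greedy run uses at most ceil(#leaders / 2)
   colours. *)

Set Implicit Arguments.
Unset Strict Implicit.
Unset Printing Implicit Defensive.

Section Coloring.
Variables (T : finType) (adj : rel T).

Lemma eq_relaxed1 (C D : eqType) (f : T -> C) (g : T -> D) :
  (forall x y, (g x == g y) = (f x == f y)) -> relaxed1 adj g = relaxed1 adj f.
Proof.
move=> fg; apply: eq_forallb => u.
by congr (_ <= 1); apply: eq_card => v; rewrite !inE fg.
Qed.

Lemma relaxed1_class (C : eqType) (f : T -> C) (c : C) :
  relaxed1 adj f -> sparse1 adj [set x | f x == c].
Proof.
move=> /forallP rel; apply/forallP => u; apply/implyP; rewrite inE => /eqP fu.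
by rewrite -fu (eq_card (_ : _ =i [set v | adj u v && (f v == f u)])) ?rel //
  => v; rewrite !inE andbC.
Qed.

Lemma chi1_min k : has_relaxed1_coloring adj k -> chi1 adj <= k.
Proof. by rewrite /chi1; case: ex_minnP => m _; apply. Qed.

Lemma chi1_spec : has_relaxed1_coloring adj (chi1 adj).
Proof. by rewrite /chi1; case: ex_minnP. Qed.

Lemma chi1_le_num_colors (f : T -> nat) :
  relaxed1 adj f -> chi1 adj <= num_colors f.
Proof.
move=> rel; apply: chi1_min; rewrite /num_colors; set l := undup _.
have lt_index x : index (f x) l < size l.
  by rewrite index_mem mem_undup map_f ?mem_enum.
apply/existsP; exists [ffun x => Ordinal (lt_index x)].
rewrite (@eq_relaxed1 _ _ f) // => x y; rewrite !ffunE -val_eqE /=.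
apply/eqP/eqP => [|-> //].
by apply: (index_inj (f x)); rewrite /l mem_undup map_f ?mem_enum.
Qed.

Lemma num_colors_le (f : T -> nat) n : (forall x, f x < n) -> num_colors f <= n.
Proof.
move=> lt_fn; rewrite /num_colors -[n](size_iota 0).
apply: uniq_leq_size => [|c]; first exact: undup_uniq.
by rewrite mem_undup mem_iota add0n => /mapP[x _ ->]; rewrite lt_fn.
Qed.

Lemma relaxed1_run_coloring (s : seq {set T}) :
  (forall x, has (fun W : {set T} => x \in W) s) -> all (sparse1 adj) s ->
  relaxed1 adj (run_coloring s).
Proof.
move=> cover /all_nthP sp; apply/forallP => u.
set i := run_coloring s u.
have in_class v : run_coloring s v = i -> v \in nth set0 s i.
  by move=> <-; have := nth_find set0 (cover v).
have i_lt : i < size s by rewrite /i /run_coloring -has_find.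
have /forallP/(_ u) := sp set0 i i_lt.
rewrite in_class // implyTb; apply: leq_trans; apply: subset_leq_card.
by apply/subsetP => v; rewrite !inE => /andP[-> /eqP/in_class ->].
Qed.

End Coloring.

Section Multipartite.
Variables (T : finType) (P : eqType) (part : T -> P).
Local Notation adj := (cmp_adj part).
Local Notation part_in := (part_in part).

Definition first2 (A : {set T}) : {set T} := [set x in take 2 (enum A)].

Lemma first2_sub (A : {set T}) : first2 A \subset A.
Proof. by apply/subsetP => x; rewrite inE => /mem_take; rewrite mem_enum. Qed.

Lemma card_first2 (A : {set T}) : #|first2 A| = minn 2 #|A|.
Proof.
by rewrite cardsE (card_uniqP _) ?size_take_min -?cardE // take_uniq ?enum_uniq.
Qed.

Lemma first2_id (A : {set T}) : #|A| <= 2 -> first2 A = A.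
Proof.
by move=> small; apply/setP => x; rewrite inE take_oversize -?cardE ?mem_enum.
Qed.

Definition leaders (U : {set T}) : {set T} :=
  [set x in U | x \in first2 (part_in U x)].

Lemma leaders_sub (U : {set T}) : leaders U \subset U.
Proof. by apply/subsetP => x; rewrite inE => /andP[]. Qed.

Lemma part_in_sub (U : {set T}) (x : T) : part_in U x \subset U.
Proof. by apply/subsetP => y; rewrite inE => /andP[]. Qed.

Lemma part_in_eq (U : {set T}) (x y : T) :
  part y = part x -> part_in U y = part_in U x.
Proof. by move=> pyx; apply/setP => z; rewrite !inE pyx. Qed.

Lemma leaders_part (U : {set T}) (x : T) :
  leaders U :&: part_in U x = first2 (part_in U x).
Proof.
apply/setP => y; rewrite inE [y \in leaders U]inE.
apply/idP/idP => [/andP[/andP[_ yF]] | yF].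
  by rewrite inE => /andP[_ /eqP/(part_in_eq U) <-].
have := subsetP (first2_sub _) y yF; rewrite inE => /andP[yU /eqP pyx].
by rewrite yU (part_in_eq U pyx) yF pyx eqxx.
Qed.

Lemma leaders_setD_part (U : {set T}) (x : T) :
  leaders (U :\: part_in U x) = leaders U :\: part_in U x.
Proof.
apply/setP => y; rewrite !inE; case pyx: (part y == part x).
  by rewrite andbT; case: (y \in U).
have -> : part_in (U :\: part_in U x) y = part_in U y.
  apply/setP => z; rewrite !inE.
  by have [->|] := eqVneq (part z) (part y); rewrite ?pyx ?andbT ?andbF.
by rewrite andbF.
Qed.

Lemma leaders_id (U : {set T}) :
  {in U, forall x, #|part_in U x| <= 2} -> leaders U = U.
Proof.
move=> small; apply/setP => x; rewrite inE; case xU: (x \in U) => //=.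
by rewrite first2_id ?small // inE xU eqxx.
Qed.

Lemma card_leaders_gt0 (U : {set T}) : U != set0 -> 0 < #|leaders U|.
Proof.
case/set0Pn => x xU; have xP : 0 < #|part_in U x|.
  by rewrite card_gt0; apply/set0Pn; exists x; rewrite inE xU eqxx.
apply: leq_trans (subset_leq_card (subsetIl _ (part_in U x))).
by rewrite leaders_part card_first2 leq_min.
Qed.

Lemma sparse1_small (S : {set T}) : #|S| <= 2 -> sparse1 adj S.
Proof.
move=> small; apply/forallP => u; apply/implyP => uS.
apply: leq_trans (subset_leq_card (_ : _ \subset S :\ u)) _.
  apply/subsetP => v; rewrite !inE /cmp_adj => /andP[-> puv]; rewrite andbT.
  by apply/eqP => vu; rewrite vu eqxx in puv.
by move: small; rewrite (cardsD1 u S) uS.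
Qed.

Lemma sparse1_part_in (U : {set T}) (x : T) : sparse1 adj (part_in U x).
Proof.
apply/forallP => u; apply/implyP; rewrite inE => /andP[_ /eqP pu].
rewrite leqW // leqn0 cards_eq0; apply/eqP/setP => v.
by rewrite !inE /cmp_adj pu eq_sym; case: (part x == part v); rewrite ?andbF.
Qed.

Lemma sparse1_cmp_small_or_in_part (S : {set T}) :
  sparse1 adj S -> #|S| <= 2 \/ exists a, S \subset [set x | part x == part a].
Proof.
move=> /forallP sp.
have [-> | [a aS]] := set_0Vmem S; first by left; rewrite cards0.
have [|/subsetPn[b bS]] := boolP (S \subset [set x | part x == part a]).
  by right; exists a.
rewrite inE => pba; left.
have two_nbrs u v w : u \in S -> v \in S -> w \in S ->
    part v != part u -> part w != part u -> v = w.
  move=> uS vS wS vu wu; have /card_le1_eqP := implyP (sp u) uS.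
  by apply; rewrite inE /cmp_adj eq_sym ?vS ?wS.
apply: leq_trans (subset_leq_card (_ : S \subset [set a; b])) _.
  apply/subsetP => c cS; rewrite !inE.
  have [pca | pca] := eqVneq (part c) (part a).
    by rewrite (two_nbrs b a c) ?eqxx // ?pca eq_sym.
  by rewrite (two_nbrs a b c) ?eqxx ?orbT.
by rewrite cards2; case: (a != b).
Qed.

Lemma card_leaders_sparse1 (U S : {set T}) :
  sparse1 adj S -> #|S :&: leaders U| <= 2.
Proof.
case/sparse1_cmp_small_or_in_part => [small | [a Sa]].
  exact: leq_trans (subset_leq_card (subsetIl _ _)) small.
apply: leq_trans (_ : #|first2 (part_in U a)| <= 2).
  apply/subset_leq_card/subsetP => x; rewrite in_setI [x \in leaders U]inE.
  case/and3P => /(subsetP Sa); rewrite inE => /eqP pxa _.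
  by rewrite (part_in_eq U pxa).
by rewrite card_first2 geq_minl.
Qed.

Lemma card_leaders_le (U : {set T}) k :
  has_relaxed1_coloring adj k -> #|leaders U| <= 2 * k.
Proof.
case/existsP => f /relaxed1_class sp.
rewrite -sum1_card (partition_big f predT) //=.
apply: (@leq_trans (\sum_(c < k) 2)).
  apply: leq_sum => c _; rewrite sum1dep_card.
  by rewrite setIdE setIC card_leaders_sparse1.
by rewrite sum_nat_const card_ord mulnC.
Qed.

Lemma max_sparse1_card (U W : {set T}) :
  (forall S : {set T}, S \subset U -> sparse1 adj S -> #|S| <= #|W|) ->
  minn 2 #|U| <= #|W|.
Proof.
move=> Wmax; rewrite -card_first2; apply: Wmax; first exact: first2_sub.
by apply: sparse1_small; rewrite card_first2 geq_minl.
Qed.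

Lemma greedy_step_class (U W : {set T}) :
  U != set0 -> greedy_step part U W ->
  [/\ W \subset U, W != set0 & sparse1 adj W].
Proof.
rewrite /greedy_step -card_gt0 => Un0; case: ifP => _.
  case=> x xU [_ ->]; split; [exact: part_in_sub | | exact: sparse1_part_in].
  by apply/set0Pn; exists x; rewrite inE xU eqxx.
case=> WU Wsp /max_sparse1_card; rewrite -card_gt0; split=> //; lia.
Qed.

Lemma card_leaders_greedy_step (U W : {set T}) :
  greedy_step part U W -> U :\: W != set0 ->
  #|leaders (U :\: W)| + 2 <= #|leaders U|.
Proof.
rewrite /greedy_step; case: ifP => [big [x _ [Wsize ->]] _ | small [WU _ Wmax]].
  rewrite leaders_setD_part -(cardsID (part_in U x) (leaders U)).
  by rewrite leaders_part card_first2 Wsize; lia.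
have -> : leaders U = U.
  move/negbT: small; rewrite -ltnNge ltnS => /bigmax_leqP le1.
  by apply: leaders_id => x xU; apply: leq_trans (le1 x xU) _.
rewrite -card_gt0 cardsD (setIidPr WU) => UWn0.
have := max_sparse1_card Wmax; have := subset_leq_card (leaders_sub (U :\: W)).
rewrite cardsD (setIidPr WU); lia.
Qed.

Lemma greedy_run_nil (s : seq {set T}) : greedy_run part set0 s -> s = [::].
Proof. by case: s => //= W s [/eqP]. Qed.

Lemma greedy_run_classes (U : {set T}) (s : seq {set T}) :
  greedy_run part U s ->
  {in U, forall x, has (fun W : {set T} => x \in W) s} /\ all (sparse1 adj) s.
Proof.
elim: s U => [|W s IH] U /=; first by move=> ->; split=> // x; rewrite inE.
case=> Un0 [/(greedy_step_class Un0) [_ _ Wsp] /IH [cover sp]].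
split=> [x xU|]; last by rewrite Wsp sp.
by case: (boolP (x \in W)) => //= xW; apply: cover; rewrite inE xW xU.
Qed.

Lemma greedy_run_size (U : {set T}) (s : seq {set T}) :
  greedy_run part U s -> 2 * size s <= #|leaders U| + 1.
Proof.
elim: s U => [|W s IH] U //= [Un0 [step run]].
have [UW0 | UWn0] := eqVneq (U :\: W) set0.
  move: run; rewrite UW0 => /greedy_run_nil -> /=.
  by have := card_leaders_gt0 Un0; lia.
by have := IH _ run; have := card_leaders_greedy_step step UWn0; lia.
Qed.

End Multipartite.

Theorem mainTheorem10 (T : finType) (P : eqType) (part : T -> P)
    (s : seq {set T}) :
  greedy_run part [set: T] s ->
  relaxed1 (cmp_adj part) (run_coloring s) /\
  num_colors (run_coloring s) = chi1 (cmp_adj part).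
Proof.
move=> run; have [cover sp] := greedy_run_classes run.
have color_lt x : run_coloring s x < size s.
  by rewrite /run_coloring -has_find cover ?in_setT.
have rel : relaxed1 (cmp_adj part) (run_coloring s).
  by apply: relaxed1_run_coloring sp => x; rewrite cover ?in_setT.
split=> //; apply/eqP; rewrite eqn_leq chi1_le_num_colors // andbT.
have chi1_lb := card_leaders_le [set: T] (chi1_spec (cmp_adj part)).
have := greedy_run_size run; have := num_colors_le color_lt; lia.
Qed.
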